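(* Let $n\ge 1$ be an integer and $\alpha,\beta\in(0,1]$. For every configuration $\mathcal{C}\in\{\bullet,\circ\}^n$ set $$\mathbb{P}^{\mathrm{st}}_n\{\mathcal{C}\} := Z_n^{-1}\sum_{T\in\mathcal{T}_n,\ R(T)=\mathcal{C}} \mu(T), \qquad Z_n:=\sum_{T\in\mathcal{T}_n}\mu(T),$$ where $\mu(T)=\alpha^{-l(T)}\beta^{-r(T)}$. Then $\mathbb{P}^{\mathrm{st}}_n$ is a stationary measure of the $n$-site open-boundary TASEP with parameters $\alpha,\beta$. That is, for every $\mathcal{C}$, $$\mathbb{P}^{\mathrm{st}}_n\{\mathcal{C}\}\sum_{\mathcal{C}'}W(\mathcal{C}\to\mathcal{C}')=\sum_{\mathcal{C}'}\mathbb{P}^{\mathrm{st}}_n\{\mathcal{C}'\}\,W(\mathcal{C}'\to\mathcal{C}).$$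
   Context: Open-boundary TASEP on $n$ sites: this is the continuous-time Markov chain on $\{\bullet,\circ\}^n$ (strings of length $n$, where $\bullet$ denotes a particle and $\circ$ a hole). Its transition rates are as follows, with $\mathcal{A},\mathcal{A}'$ arbitrary strings: - $W(\circ\mathcal{A}\to\bullet\mathcal{A})=\alpha$; - $W(\mathcal{A}\bullet\to\mathcal{A}\circ)=\beta$; - $W(\mathcal{A}\bullet\circ\mathcal{A}'\to\mathcal{A}\circ\bullet\mathcal{A}')=1$; - $W(\mathcal{C}\to\mathcal{C}')=0$ for all other pairs. A plane binary tree is a finite rooted tree in which every vertex is either an endpoint (a leaf, with no children) or has exactly two children, an ordered left child and right child. Every non-root vertex is thus either a left descendent or a right descendent of its parent. The endpoints are ordered from left to right in the planar order. $\mathcal{T}_n$ denotes the set of plane binary trees with exactly $n+2$ endpoints. The reduced configuration of $T\in\mathcal{T}_n$ is $R(T)=(t_1,\dots,t_n)\in\{\bullet,\circ\}^n$. Here $t_k=\bullet$ if the $(k+1)$-th endpoint from the left is a left child, and $t_k=\circ$ if it is a right child. The leftmost and rightmost endpoints are ignored. $l(T)$ (respectively $r(T)$) is the number of vertices lying strictly between the leftmost (respectively rightmost) endpoint and the root on the path joining them, excluding both the endpoint and the root. *)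

From HB Require Import structures.
From mathcomp Require Import all_boot all_order all_algebra.
Set Implicit Arguments. Unset Strict Implicit. Unset Printing Implicit Defensive.
Import Order.TTheory GRing.Theory Num.Theory.

Inductive btree : Type := Leaf | Node of btree & btree.

Fixpoint btree_eqb (s t : btree) : bool :=
  match s, t with
  | Leaf, Leaf => true
  | Node s1 s2, Node t1 t2 => btree_eqb s1 t1 && btree_eqb s2 t2
  | _, _ => false
  end.

Lemma btree_eqP : Equality.axiom btree_eqb.
Proof.
elim=> [|s1 IH1 s2 IH2] [|t1 t2] /=; try by constructor.
by apply: (iffP andP) => [[/IH1 -> /IH2 ->]|[<- <-]]; split; [apply/IH1|apply/IH2].
Qed.

HB.instance Definition _ := hasDecEq.Build btree btree_eqP.

Fixpoint nleaves (t : btree) : nat :=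
  match t with Leaf => 1 | Node l r => nleaves l + nleaves r end.

Fixpoint trees_depth (d : nat) : seq btree :=
  match d with
  | 0 => [:: Leaf]
  | d'.+1 => Leaf :: [seq Node l r | l <- trees_depth d', r <- trees_depth d']
  end.

(* T_n : plane binary trees with exactly n+2 endpoints (a tree with n+2
   endpoints has depth at most n+1), listed without repetition. *)
Definition T_ (n : nat) : seq btree :=
  undup [seq t <- trees_depth n.+1 | nleaves t == n.+2].

(* For each endpoint in planar (left-to-right) order: true iff it is a left
   child.  [side] is the side of the current subtree w.r.t. its parent. *)
Fixpoint leaf_sides (t : btree) (side : bool) : seq bool :=
  match t with
  | Leaf => [:: side]
  | Node l r => leaf_sides l true ++ leaf_sides r false
  end.

Definition endpoint_sides (t : btree) : seq bool :=
  match t with Leaf => [::] | Node l r => leaf_sides l true ++ leaf_sides r false end.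

(* reduced configuration R(T): drop leftmost and rightmost endpoints;
   true = particle (left child), false = hole (right child) *)
Definition reduced (t : btree) : seq bool :=
  let s := endpoint_sides t in take (size s - 2) (behead s).

Fixpoint ldepth (t : btree) : nat :=
  match t with Leaf => 0 | Node l _ => (ldepth l).+1 end.
Fixpoint rdepth (t : btree) : nat :=
  match t with Leaf => 0 | Node _ r => (rdepth r).+1 end.

(* l(T), r(T): number of vertices strictly between the endpoint and the root *)
Definition lT (t : btree) : nat := (ldepth t).-1.
Definition rT (t : btree) : nat := (rdepth t).-1.

Local Open Scope ring_scope.

Definition mu (R : fieldType) (alpha beta : R) (t : btree) : R :=
  alpha ^- lT t * beta ^- rT t.

Definition Zn (R : fieldType) (alpha beta : R) (n : nat) : R :=
  \sum_(t <- T_ n) mu alpha beta t.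

Definition Pst (R : fieldType) (alpha beta : R) (n : nat) (C : n.-tuple bool) : R :=
  (Zn alpha beta n)^-1 * \sum_(t <- T_ n | reduced t == val C) mu alpha beta t.

Definition W (R : ringType) (alpha beta : R) (n : nat) (C C' : n.-tuple bool) : R :=
  let c := val C in let c' := val C' in
  (if (0 < n)%N && ~~ nth false c 0 && (c' == set_nth false c 0 true)
   then alpha else 0)
  + (if (0 < n)%N && nth false c n.-1 && (c' == set_nth false c n.-1 false)
     then beta else 0)
  + \sum_(i < n.-1)
      (if nth false c i && ~~ nth false c i.+1
          && (c' == set_nth false (set_nth false c i false) i.+1 true)
       then 1 else 0).

(* Write F_n(c) for the unnormalised weight of c, the sum of mu(T) over the trees T with
   R(T) = c.  Grafting a cherry onto the i-th endpoint is a bijection from the trees with n+2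
   endpoints onto the trees with n+3 endpoints whose endpoints i and i+1 are a left and a right
   child; it increases l(T) exactly when i is the leftmost endpoint and r(T) exactly when i is the
   rightmost one.  This yields the relations of the matrix ansatz of Derrida, Evans, Hakim and
   Pasquier:
     F_{n+1}(∘v) = α⁻¹ F_n(v),   F_{n+1}(v•) = β⁻¹ F_n(v),   F_{n+1}(u•∘v) = F_n(u•v) + F_n(u∘v).
   By these relations the imbalance of every local transition of c (entry, exit, or a hop across
   the bond i, i+1) is a difference of the terms ±F_n(c with site j deleted), so the defects
   telescope and F satisfies the master equation. *)

From HB Require Import structures.
From mathcomp Require Import all_boot all_order all_algebra.
From mathcomp Require Import zify ring.
Import Order.TTheory GRing.Theory Num.Theory.
Set Implicit Arguments. Unset Strict Implicit. Unset Printing Implicit Defensive.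

Lemma nleaves_gt0 t : (0 < nleaves t)%N.
Proof. by elim: t => //= l IHl r _; rewrite addn_gt0 IHl. Qed.

Lemma size_leaf_sides t b : size (leaf_sides t b) = nleaves t.
Proof. by elim: t b => //= l IHl r IHr b; rewrite size_cat IHl IHr. Qed.

Lemma nth0_leaf_sides t b : nth false (leaf_sides t b) 0 = (if t is Leaf then b else true).
Proof.
by elim: t b => //= l IHl r _ b; rewrite nth_cat size_leaf_sides nleaves_gt0 IHl; case: l {IHl}.
Qed.

Lemma last_leaf_sides t b x : last x (leaf_sides t b) = (if t is Leaf then b else false).
Proof. by elim: t b x => //= l _ r IHr b x; rewrite last_cat IHr; case: r {IHr}. Qed.

Lemma leaf_sides_reduced t : t != Leaf -> leaf_sides t true = true :: rcons (reduced t) false.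
Proof.
case: t => // l r _.
have := nth0_leaf_sides (Node l r) true; have := last_leaf_sides (Node l r) true false.
rewrite /reduced /=; case: (_ ++ _) => [|x s] //= hlast hx; subst x.
case/lastP: s hlast => [|s y] //=; rewrite last_rcons => ->.
by rewrite size_rcons subSS subn1 -cats1 take_size_cat // cats1.
Qed.

Lemma reduced_from_sides t w :
  t != Leaf -> leaf_sides t true = true :: rcons w false -> reduced t = w.
Proof. by move=> /leaf_sides_reduced -> [] /rcons_inj []. Qed.

Lemma size_reduced t : size (reduced t) = (nleaves t - 2)%N.
Proof.
case: t => // l r; rewrite -(size_leaf_sides _ true) leaf_sides_reduced //=.
by rewrite size_rcons subSS subn1.
Qed.

Fixpoint height t := if t is Node l r then (maxn (height l) (height r)).+1 else 0.

Lemma mem_trees_depth d t : (t \in trees_depth d) = (height t <= d)%N.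
Proof.
elim: d t => [|d IH] [|l r] //=; rewrite ?inE //= ltnS geq_max -!IH.
apply/allpairsP/andP => [[[x y] /= [hx hy [-> ->]]] //|[hl hr]].
by exists (l, r).
Qed.

Lemma height_lt_nleaves t : (height t < nleaves t)%N.
Proof.
elim: t => //= l IHl r IHr.
by have := nleaves_gt0 l; have := nleaves_gt0 r; lia.
Qed.

Lemma mem_T n t : (t \in T_ n) = (nleaves t == n.+2).
Proof.
rewrite /T_ mem_undup mem_filter mem_trees_depth.
apply/andP/idP => [[] //|/eqP h]; split; first by rewrite h.
by have := height_lt_nleaves t; lia.
Qed.

Lemma size_reduced_T n t : t \in T_ n -> size (reduced t) = n.
Proof. by rewrite mem_T size_reduced => /eqP ->; rewrite subSS subSS subn0. Qed.

Lemma T_neq_Leaf n t : t \in T_ n -> t != Leaf.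
Proof. by rewrite mem_T; case: t. Qed.

Fixpoint graft (i : nat) (t : btree) : btree :=
  match t with
  | Leaf => Node Leaf Leaf
  | Node l r => if (i < nleaves l)%N then Node (graft i l) r
                else Node l (graft (i - nleaves l) r)
  end.

Fixpoint prune (i : nat) (t : btree) : btree :=
  match t with
  | Leaf => Leaf
  | Node Leaf Leaf => Leaf
  | Node l r => if (i.+1 < nleaves l)%N then Node (prune i l) r
                else Node l (prune (i - nleaves l) r)
  end.

Lemma graft_neq_Leaf i t : graft i t != Leaf.
Proof. by case: t => //= l r; case: ifP. Qed.

Lemma nleaves_graft i t : nleaves (graft i t) = (nleaves t).+1.
Proof.
by elim: t i => //= l IHl r IHr i; case: ifP => _ /=; rewrite ?IHl ?IHr ?addSn ?addnS.
Qed.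

Lemma prune_Node i l r : (l != Leaf) || (r != Leaf) -> prune i (Node l r) =
  if (i.+1 < nleaves l)%N then Node (prune i l) r else Node l (prune (i - nleaves l) r).
Proof. by case: l r => [|? ?] [|? ?]. Qed.

Lemma graftK i t : (i < nleaves t)%N -> prune i (graft i t) = t.
Proof.
elim: t i => [|l IHl r IHr] i //= hi.
case: ifP => hl; rewrite prune_Node ?graft_neq_Leaf ?orbT //.
  by rewrite nleaves_graft ltnS hl IHl.
by rewrite ifN ?IHr //; lia.
Qed.

Lemma pruneK i t b : (i.+1 < nleaves t)%N ->
  nth false (leaf_sides t b) i -> ~~ nth false (leaf_sides t b) i.+1 -> graft i (prune i t) = t.
Proof.
elim: t b i => [|l IHl r IHr] b i hi; first by case: i hi.
rewrite /= in hi.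
case: (boolP ((l != Leaf) || (r != Leaf))) => [nLeaf|]; last first.
  by rewrite negb_or !negbK => /andP[/eqP -> /eqP ->]; case: i hi.
rewrite prune_Node // !nth_cat !size_leaf_sides.
have [hil|hir] := ltnP i.+1 (nleaves l).
  rewrite ltnW // => hli hlSi.
  have Eprune := IHl true i hil hli hlSi.
  have hn : nleaves l = (nleaves (prune i l)).+1 by rewrite -{1}Eprune nleaves_graft.
  by rewrite /= -ltnS -hn hil Eprune.
have [hlast|hge] := ltnP i (nleaves l).
  have ->: i = (nleaves l).-1 by lia.
  have ->: ((nleaves l).-1.+1 - nleaves l = 0)%N by lia.
  rewrite -(size_leaf_sides l true) nth_last last_leaf_sides nth0_leaf_sides.
  by case: (l) (r) nLeaf => [|? ?] [|? ?].
by move=> hri hrSi; rewrite /= ltnNge hge /= (IHr false) -?subSn //; lia.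
Qed.

Lemma leaf_sides_graft i t b : (i < nleaves t)%N ->
  leaf_sides (graft i t) b = take i (leaf_sides t b) ++ true :: false :: drop i.+1 (leaf_sides t b).
Proof.
elim: t b i => [|l IHl r IHr] b i /=; first by case: i.
move=> hi; have [hl|hl] := ltnP i (nleaves l); rewrite /= take_cat drop_cat !size_leaf_sides.
  rewrite hl IHl // -catA; case: ltnP => // hSl.
  have ->: i.+1 = nleaves l by lia.
  by rewrite subnn drop0 -(size_leaf_sides l true) drop_size.
by rewrite !ltnNge hl (leqW hl) /= IHr ?subSn ?catA //; lia.
Qed.

Lemma ldepth_graft i t : (i < nleaves t)%N -> ldepth (graft i t) = ldepth t + (i == 0%N).
Proof.
elim: t i => [|l IHl r IHr] i /=; first by case: i.
move=> hi; case: ifP => hl /=; first by rewrite IHl.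
by have := nleaves_gt0 l; case: i hl {hi} => [|i] hl; rewrite ?addn0 //; lia.
Qed.

Lemma rdepth_graft i t : (i < nleaves t)%N ->
  rdepth (graft i t) = rdepth t + (i == (nleaves t).-1).
Proof.
elim: t i => [|l IHl r IHr] i /=; first by case: i.
have := nleaves_gt0 r => hr hi; case: ifP => hl /=.
  have ->: (i == (nleaves l + nleaves r).-1) = false by apply/eqP; lia.
  by rewrite addn0.
rewrite IHr; last by lia.
by congr (_ + nat_of_bool _).+1; apply/eqP/eqP; lia.
Qed.

Local Open Scope ring_scope.

Lemma big_T_graft (R : nmodType) n i (P : pred btree) (F : btree -> R) : (i < n.+2)%N ->
  (forall t, P t -> nth false (leaf_sides t true) i && ~~ nth false (leaf_sides t true) i.+1) ->
  \sum_(t <- T_ n.+1 | P t) F t = \sum_(t <- T_ n | P (graft i t)) F (graft i t).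
Proof.
move=> hi cherry; rewrite -(big_map (graft i) P F) -[LHS]big_filter -[RHS]big_filter.
apply: perm_big; apply: uniq_perm; rewrite ?filter_uniq ?undup_uniq //.
  rewrite map_inj_in_uniq ?undup_uniq // => x y; rewrite !mem_T => /eqP hx /eqP hy e.
  by rewrite -(@graftK i x) ?hx // e graftK ?hy.
move=> t; rewrite !mem_filter; case Pt: (P t) => //=; rewrite mem_T.
apply/eqP/mapP => [hn|[t' + ->]]; last by rewrite mem_T nleaves_graft => /eqP ->.
have /andP[hli hlSi] := cherry t Pt.
have hSi : (i.+1 < nleaves t)%N by rewrite hn; lia.
have Et := pruneK hSi hli hlSi.
exists (prune i t) => //; rewrite mem_T.
by move: hn; rewrite -{1}Et nleaves_graft => -[->].
Qed.

Lemma nth_leaf_sides t k :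
  nth false (leaf_sides t true) k = nth false (true :: rcons (reduced t) false) k.
Proof.
by case: t => [|l r]; [case: k => [|[|k]] //=; rewrite nth_nil | rewrite leaf_sides_reduced].
Qed.

Lemma reduced_graft_first n t : t \in T_ n -> reduced (graft 0 t) = false :: reduced t.
Proof.
move=> tT; apply: reduced_from_sides; first exact: graft_neq_Leaf.
by rewrite leaf_sides_graft ?nleaves_gt0 // leaf_sides_reduced ?(T_neq_Leaf tT) //= drop0.
Qed.

Lemma reduced_graft_last n t : t \in T_ n -> reduced (graft n.+1 t) = rcons (reduced t) true.
Proof.
move=> tT; have := tT; rewrite mem_T => /eqP tn.
apply: reduced_from_sides; first exact: graft_neq_Leaf.
rewrite leaf_sides_graft ?tn // leaf_sides_reduced ?(T_neq_Leaf tT) //= -cats1 -(size_reduced_T tT).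
by rewrite take_size_cat // drop_oversize ?size_cat ?addn1 // -!cats1 -catA.
Qed.

Lemma reduced_graft_inner n k t : t \in T_ n -> (k < n)%N ->
  reduced (graft k.+1 t) = take k (reduced t) ++ true :: false :: drop k.+1 (reduced t).
Proof.
move=> tT hk; have := tT; rewrite mem_T => /eqP tn.
apply: reduced_from_sides; first exact: graft_neq_Leaf.
rewrite leaf_sides_graft ?leaf_sides_reduced ?(T_neq_Leaf tT) //=; last by rewrite tn; lia.
have hr : (k < size (reduced t))%N by rewrite (size_reduced_T tT).
by rewrite -cats1 take_cat hr cats1 drop_rcons // rcons_cat.
Qed.

Lemma mu_graft (R : fieldType) (a b : R) n i t : t \in T_ n -> (i < n.+2)%N ->
  mu a b (graft i t) =
  (if i == 0%N then a^-1 else 1) * (if i == n.+1 then b^-1 else 1) * mu a b t.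
Proof.
move=> tT hi; have := tT; rewrite mem_T => /eqP tn.
have [lpos rpos] : (0 < ldepth t)%N /\ (0 < rdepth t)%N by case: (t) (T_neq_Leaf tT).
rewrite /mu /lT /rT ldepth_graft ?rdepth_graft ?tn // -(prednK lpos) -(prednK rpos) /=.
by case: (i == 0%N); case: (i == n.+1); rewrite ?addn0 ?addn1 /= ?exprS ?invfM; ring.
Qed.

Section Weights.

Variables (R : fieldType) (a b : R).

Definition weight n (c : seq bool) : R := \sum_(t <- T_ n | reduced t == c) mu a b t.

Lemma weight_graft n i c : (i < n.+2)%N ->
  nth false (true :: rcons c false) i && ~~ nth false (true :: rcons c false) i.+1 ->
  weight n.+1 c = \sum_(t <- T_ n) if reduced (graft i t) == c then mu a b (graft i t) else 0.
Proof.
move=> hi cherry; rewrite /weight (@big_T_graft _ n i) ?big_mkcond // => t /eqP rt.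
by rewrite !nth_leaf_sides rt.
Qed.

Lemma weight_hole_first n v : weight n.+1 (false :: v) = a^-1 * weight n v.
Proof.
rewrite (weight_graft (i := 0)) // /weight mulr_sumr [RHS]big_mkcond; apply: eq_big_seq => t tT.
by rewrite (reduced_graft_first tT) (mu_graft _ _ tT) // eqseq_cons /= mulr1.
Qed.

Lemma weight_particle_last n v : size v = n -> weight n.+1 (rcons v true) = b^-1 * weight n v.
Proof.
move=> hv; rewrite (weight_graft (i := n.+1)) //; last first.
  by rewrite /= !nth_rcons !size_rcons hv ltnSn !ltnn !eqxx.
rewrite /weight mulr_sumr [RHS]big_mkcond; apply: eq_big_seq => t tT.
by rewrite (reduced_graft_last tT) (mu_graft _ _ tT) // eqseq_rcons andbT /= mul1r eqxx.
Qed.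

Lemma weight_particle_hole n u v : (size u + size v).+1 = n ->
  weight n.+1 (u ++ true :: false :: v) = weight n (u ++ true :: v) + weight n (u ++ false :: v).
Proof.
move=> huv; rewrite (weight_graft (i := (size u).+1)); last first.
- rewrite rcons_cat -cat_cons -[(size u).+1]/(size (true :: u)) !nth_cat.
  by rewrite ltnn subnn ltnNge leqnSn subSnn.
- by rewrite -huv; lia.
rewrite /weight !(big_mkcond (fun t : btree => reduced t == _)) -big_split.
apply: eq_big_seq => t tT /=; have hu : (size u < n)%N by rewrite -huv; lia.
rewrite (reduced_graft_inner tT hu) (mu_graft _ _ tT) /= ?eqSS ?(ltn_eqF hu) ?mul1r; last lia.
have [p [x [q [rt hp]]]] : exists p x q, reduced t = p ++ x :: q /\ size p = size u.
  have hr : (size u < size (reduced t))%N by rewrite (size_reduced_T tT).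
  exists (take (size u) (reduced t)), (nth false (reduced t) (size u)).
  exists (drop (size u).+1 (reduced t)).
  by rewrite -drop_nth // cat_take_drop size_takel // ltnW.
rewrite rt -hp take_size_cat // drop_cat ltnNge leqnSn subSnn /= drop0 !eqseq_cat //= !eqseq_cons.
by case: (x); case: (p == u); case: (q == v); rewrite /= ?addr0 ?add0r.
Qed.

End Weights.

Section SetNthSwap.

Variables (T : eqType) (x0 : T).

Lemma eq_set_nthC (c c' : seq T) i x y : size c' = size c -> (i < size c)%N ->
  (nth x0 c' i == y) && (c == set_nth x0 c' i x) = (nth x0 c i == x) && (c' == set_nth x0 c i y).
Proof.
wlog suff imp : c c' x y / size c' = size c -> (i < size c)%N ->
    (nth x0 c' i == y) && (c == set_nth x0 c' i x) -> (nth x0 c i == x) && (c' == set_nth x0 c i y).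
  by move=> hs hi; apply/idP/idP; apply: imp; rewrite // hs.
move=> hs hi /andP[/eqP <- /eqP ->]; rewrite nth_set_nth /= eqxx set_set_nth !eqxx /=.
by rewrite set_nthE hs hi -drop_nth ?hs // cat_take_drop.
Qed.

Lemma eq_set_nth2C (c c' : seq T) i j x y x' y' : i != j -> size c' = size c ->
    (i < size c)%N -> (j < size c)%N ->
  [&& nth x0 c' i == y, nth x0 c' j == y' & c == set_nth x0 (set_nth x0 c' i x) j x'] =
  [&& nth x0 c i == x, nth x0 c j == x' & c' == set_nth x0 (set_nth x0 c i y) j y'].
Proof.
move=> hij; wlog suff imp : c c' x y x' y' / size c' = size c -> (i < size c)%N -> (j < size c)%N ->
    [&& nth x0 c' i == y, nth x0 c' j == y' & c == set_nth x0 (set_nth x0 c' i x) j x'] ->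
    [&& nth x0 c i == x, nth x0 c j == x' & c' == set_nth x0 (set_nth x0 c i y) j y'].
  by move=> hs hi hj; apply/idP/idP; apply: imp; rewrite // hs.
move=> hs hi hj /and3P[/eqP <- /eqP <- /eqP ->]; apply/and3P; split.
- by rewrite nth_set_nth /= eq_sym (negbTE hij) nth_set_nth /= eqxx.
- by rewrite !nth_set_nth /= eqxx.
apply/eqP/(@eq_from_nth _ x0) => [|k _]; first by rewrite !size_set_nth; lia.
rewrite nth_set_nth /=; case: eqVneq => [-> //|nkj].
rewrite nth_set_nth /=; case: eqVneq => [-> //|nki].
by rewrite nth_set_nth /= (negbTE nkj) nth_set_nth /= (negbTE nki).
Qed.

End SetNthSwap.

Section Rates.

Variables (R : nzRingType) (a b : R).

Lemma sum_tuple_eq_if n (P : bool) (x : seq bool) (g : seq bool -> R) k : size x = n ->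
  \sum_(C : n.-tuple bool) g C * (if P && (val C == x) then k else 0) = if P then g x * k else 0.
Proof.
move=> hx; case: P => /=; last by rewrite big1 // => C _; rewrite mulr0.
rewrite (bigD1 (Tuple (introT eqP hx))) //= eqxx big1 ?addr0 // => C hC.
by rewrite ifF ?mulr0 //; apply: contraNF hC => /eqP e; apply/eqP/val_inj.
Qed.

Lemma sum_W_out m (C : m.+1.-tuple bool) :
  \sum_(C' : m.+1.-tuple bool) W a b C C' =
  (if ~~ nth false C 0 then a else 0) + (if nth false C m then b else 0)
  + \sum_(i < m) (if nth false C i && ~~ nth false C i.+1 then 1 else 0).
Proof.
have sum_if n (P : bool) (x : seq bool) (k : R) : size x = n ->
    \sum_(C' : n.-tuple bool) (if P && (val C' == x) then k else 0) = if P then k else 0.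
  move=> hx; have := sum_tuple_eq_if P (fun=> 1) k hx.
  by under eq_bigr do rewrite mul1r; rewrite mul1r.
have hC := size_tuple C.
rewrite /W !big_split /= exchange_big /= !sum_if ?size_set_nth ?hC //; try lia.
by congr (_ + _); apply: eq_bigr => i _; rewrite sum_if // !size_set_nth hC; have := ltn_ord i; lia.
Qed.

Lemma sum_W_in m (f : seq bool -> R) (C : m.+1.-tuple bool) :
  \sum_(C' : m.+1.-tuple bool) f C' * W a b C' C =
  (if nth false C 0 then f (set_nth false C 0 false) * a else 0)
  + (if ~~ nth false C m then f (set_nth false C m true) * b else 0)
  + \sum_(i < m) (if ~~ nth false C i && nth false C i.+1
                  then f (set_nth false (set_nth false C i true) i.+1 false) else 0).
Proof.
have hC := size_tuple C.
rewrite /W; under eq_bigr do rewrite !mulrDr mulr_sumr.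
rewrite !big_split /= exchange_big /=; congr (_ + _ + _).
- rewrite -(@sum_tuple_eq_if m.+1 _ (set_nth false C 0 false) f) ?size_set_nth ?hC; last lia.
  apply: eq_bigr => C' _.
  by rewrite -eqbF_neg eq_set_nthC ?size_tuple // eqb_id.
- rewrite -(@sum_tuple_eq_if m.+1 _ (set_nth false C m true) f) ?size_set_nth ?hC; last lia.
  apply: eq_bigr => C' _.
  by rewrite -[nth false (val C') m]eqb_id eq_set_nthC ?size_tuple ?hC // eqbF_neg.
apply: eq_bigr => i _; have := ltn_ord i => hi; rewrite -[f _]mulr1.
rewrite -(@sum_tuple_eq_if m.+1 _ (set_nth false (set_nth false C i true) i.+1 false) f); last first.
  by rewrite !size_set_nth hC; lia.
apply: eq_bigr => C' _.
rewrite -[nth false (val C') i]eqb_id -eqbF_neg -andbA eq_set_nth2C ?size_tuple ?hC; try lia.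
by rewrite eqbF_neg eqb_id andbA.
Qed.

End Rates.

Section MasterEquation.

Variables (R : fieldType) (a b : R).
Hypotheses (a_neq0 : a != 0) (b_neq0 : b != 0).

Definition deletion_term m (c : seq bool) j : R :=
  (if nth false c j then -1 else 1) * weight a b m (take j c ++ drop j.+1 c).

Lemma entry_balance m c : size c = m.+1 ->
  (if nth false c 0 then weight a b m.+1 (set_nth false c 0 false) * a else 0)
  = weight a b m.+1 c * (if ~~ nth false c 0 then a else 0) - deletion_term m c 0.
Proof.
case: c => // x c _; rewrite /deletion_term /= drop0.
by case: x; rewrite /= weight_hole_first mulrAC mulVf // ?mul1r ?mulr0; ring.
Qed.

Lemma exit_balance m c : size c = m.+1 ->
  (if ~~ nth false c m then weight a b m.+1 (set_nth false c m true) * b else 0)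
  = weight a b m.+1 c * (if nth false c m then b else 0) + deletion_term m c m.
Proof.
case/lastP: c => [|c x] // /eqP; rewrite size_rcons eqSS => /eqP <-.
have set_last y : set_nth false (rcons c x) (size c) y = rcons c y by elim: (c) => //= z s ->.
have drop_last : take (size c) (rcons c x) ++ drop (size c).+1 (rcons c x) = c.
  by rewrite -cats1 take_size_cat // drop_oversize ?size_cat ?addn1 // cats0.
rewrite /deletion_term nth_rcons ltnn eqxx set_last drop_last.
by case: (x); rewrite /= weight_particle_last // mulrAC mulVf // ?mul1r ?mulr0; ring.
Qed.

Lemma hop_balance m c i : size c = m.+1 -> (i < m)%N ->
  (if ~~ nth false c i && nth false c i.+1
   then weight a b m.+1 (set_nth false (set_nth false c i true) i.+1 false) else 0)
  = weight a b m.+1 c * (if nth false c i && ~~ nth false c i.+1 then 1 else 0)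
    + (deletion_term m c i - deletion_term m c i.+1).
Proof.
move=> hc hi.
have [u [x [y [v [ec hu]]]]] : exists u x y v, c = u ++ x :: y :: v /\ size u = i.
  exists (take i c), (nth false c i), (nth false c i.+1), (drop i.+2 c).
  by rewrite -!drop_nth ?cat_take_drop ?size_takel ?hc //; lia.
subst c i; rewrite size_cat /= in hc; rewrite /deletion_term.
have nth_at k w : nth false (u ++ w) (size u + k) = nth false w k.
  by rewrite nth_cat ltnNge leq_addr addKn.
have set_at k w z : set_nth false (u ++ w) (size u + k) z = u ++ set_nth false w k z.
  by elim: (u) => //= ? ? ->.
have take_drop_at k :
    take (size u + k) (u ++ x :: y :: v) ++ drop (size u + k).+1 (u ++ x :: y :: v)
    = u ++ take k [:: x, y & v] ++ drop k.+1 [:: x, y & v].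
  by rewrite take_cat drop_cat !ltnNge leq_addr (leqW (leq_addr _ _)) /= -addnS !addKn catA.
rewrite -[size u]addn0 (take_drop_at 0) -addnS (take_drop_at 1) !nth_at !set_at /= drop0.
have huv : (size u + size v).+1 = m by lia.
have Whop := weight_particle_hole a b huv.
by case: (x); case: (y); rewrite /= ?Whop; ring.
Qed.

Lemma master_equation_weight m (C : m.+1.-tuple bool) :
  weight a b m.+1 C * (\sum_(C' : m.+1.-tuple bool) W a b C C')
  = \sum_(C' : m.+1.-tuple bool) weight a b m.+1 C' * W a b C' C.
Proof.
have hC := size_tuple C.
rewrite sum_W_out (sum_W_in _ _ (weight a b m.+1)) entry_balance ?exit_balance //.
under [in RHS]eq_bigr => i _ do rewrite hop_balance ?hC //.
have telescope : \sum_(i < m) (deletion_term m C i - deletion_term m C i.+1)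
    = deletion_term m C 0 - deletion_term m C m.
  rewrite -opprB -(telescope_sumr (deletion_term m C) (leq0n m)) big_mkord -sumrN.
  by apply: eq_bigr => i _; rewrite opprB.
rewrite big_split /= -mulr_sumr telescope.
move: (if ~~ _ then a else _) (if nth _ _ m then b else _) => p q.
ring.
Qed.

End MasterEquation.

Theorem proposition1 (R : realFieldType) (n : nat) (alpha beta : R) :
  (1 <= n)%N -> 0 < alpha <= 1 -> 0 < beta <= 1 ->
  forall C : n.-tuple bool,
    Pst alpha beta C * (\sum_(C' : n.-tuple bool) W alpha beta C C')
    = \sum_(C' : n.-tuple bool) Pst alpha beta C' * W alpha beta C' C.
Proof.
case: n => // m _ /andP[alpha_gt0 _] /andP[beta_gt0 _] C.
rewrite /Pst -mulrA; under [RHS]eq_bigr do rewrite -mulrA.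
by rewrite -mulr_sumr master_equation_weight ?gt_eqF.
Qed.
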